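(* Let $G$ be a layered graph over $\Sigma_{in}$ of depth $n$, $\epsilon>0$, and let $\mathsf{C}$ be an $\epsilon$-sensitive $(G,\Sigma_{out})$-code. For any $w\in\Sigma_{out}^n$, it holds that $|L_i(\mathsf{C},w,\epsilon)|\le1$ for at least $(1-\epsilon)n$ values of $i\le n$.
   Context: A layered graph over alphabet $\Sigma$ of depth $n$ is a directed graph whose vertices are partitioned into layers $0,\dots,n$, with exactly one vertex (the root) in layer $0$, and each vertex in layer $i<n$ has exactly $|\Sigma|$ out-edges to layer $i+1$ labeled by the distinct elements of $\Sigma$ (endpoints need not be distinct). A string $p\in\Sigma_{in}^i$ determines a unique root path ending at vertex $v(p)$ in layer $i$. A $(G,\Sigma_{out})$-code $\mathsf{C}$ assigns an element of $\Sigma_{out}$ to each edge; $\mathsf{C}(p)$ is the label string along $p$. Suffix distance: $\Delta_{sfx}(a,b)=\max_{0\le i\le m-1}\frac{\Delta(a[i+1:m],b[i+1:m])}{m-i}$, $\Delta$ Hamming distance. $L_i(\mathsf{C},w,\epsilon)=\{v(p):p\in\Sigma_{in}^i,\ \Delta_{sfx}(\mathsf{C}(p),w[1:i])<1-\epsilon\}$, $L(\mathsf{C},w,\epsilon)=\bigcup_{i=1}^nL_i(\mathsf{C},w,\epsilon)$. For $S\subseteq L(\mathsf{C},w,\epsilon)$, a prefix tree of $S$ is a union of paths $p(v)$ ($v\in S$) from the root to $v$, each with $\Delta_{sfx}(\mathsf{C}(p(v)),w[1:|p(v)|])<1-\epsilon$, that forms a rooted tree; $\mathcal{PT}(\mathsf{C},w,\epsilon)$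 is the set of all such prefix trees of subsets of $L(\mathsf{C},w,\epsilon)$. $agr(\mathsf{C}(H),w(H))$ is the number of edges of $H$ whose $\mathsf{C}$-label equals $w[i]$, $i$ the edge's depth. $\mathsf{C}$ is $\epsilon$-sensitive if for all $w\in\Sigma_{out}^n$ and all $PT\in\mathcal{PT}(\mathsf{C},w,\epsilon)$, $agr(\mathsf{C}(PT),w(PT))\le(1+\epsilon)n$. *)

From mathcomp Require Import all_boot all_order all_algebra.
Set Implicit Arguments. Unset Strict Implicit. Unset Printing Implicit Defensive.
Import Order.TTheory GRing.Theory Num.Theory.
Local Open Scope ring_scope.

(* Edges are identified
   with pairs (v, a) : V * Sin (only meaningful when layer v < n). *)
Definition layered_graph (Sin V : finType) (n : nat)
  (layer : V -> nat) (root : V) (next : V -> Sin -> V) : Prop :=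
  [/\ forall v, (layer v <= n)%N,
      layer root = 0%N,
      (forall v, layer v = 0%N -> v = root) &
      (forall v a, (layer v < n)%N -> layer (next v a) = (layer v).+1)].

Section Codes.
Variables (Sin Sout V : finType) (n : nat) (layer : V -> nat) (root : V)
  (next : V -> Sin -> V) (C : V -> Sin -> Sout).

Definition vtx (p : seq Sin) : V := foldl next root p.

Fixpoint edges_from (u : V) (p : seq Sin) : seq (V * Sin) :=
  if p is a :: p' then (u, a) :: edges_from (next u a) p' else [::].

Definition codeword (p : seq Sin) : seq Sout :=
  [seq C e.1 e.2 | e <- edges_from root p].

Variable (R : realFieldType).

Definition hamming (a b : seq Sout) : nat :=
  count (fun xy : Sout * Sout => xy.1 != xy.2) (zip a b).

Definition dsfx (a b : seq Sout) : R :=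
  let m := size a in
  \big[Num.max/0]_(i < m)
     ((hamming (drop i a) (drop i b))%:R / (m - i)%:R).

Variable (eps : R) (w : n.-tuple Sout).

Definition Lset (i : nat) : {set V} :=
  [set v | [exists p : i.-tuple Sin,
              (vtx p == v) && (dsfx (codeword p) (take i w) < 1 - eps)]].

Definition Lall : {set V} :=
  [set v | [exists i : 'I_n.+1, (0 < i)%N && (v \in Lset i)]].

Definition union_edges (S : {set V}) (p : V -> seq Sin) : {set V * Sin} :=
  \bigcup_(v in S) [set e in edges_from root (p v)].

Definition is_prefix_tree (S : {set V}) (p : V -> seq Sin) : Prop :=
  [/\ S \subset Lall,
      (forall v, v \in S ->
         [/\ (size (p v) <= n)%N, vtx (p v) = v &
             dsfx (codeword (p v)) (take (size (p v)) w) < 1 - eps]) &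
      (* the union forms a tree rooted at root: every vertex has at most one
         incoming edge in the union (connectivity/acyclicity are automatic) *)
      (forall e1 e2, e1 \in union_edges S p -> e2 \in union_edges S p ->
         next e1.1 e1.2 = next e2.1 e2.2 -> e1 = e2)].

(* agr(C(H), w(H)): edge at depth i = layer of source + 1 agrees with w[i] *)
Definition agr (H : {set V * Sin}) : nat :=
  #|[set e in H | Some (C e.1 e.2) == onth w (layer e.1)]|.

End Codes.

Definition eps_sensitive (Sin Sout V : finType) (n : nat) (layer : V -> nat)
  (root : V) (next : V -> Sin -> V) (C : V -> Sin -> Sout)
  (R : realFieldType) (eps : R) : Prop :=
  forall (w : n.-tuple Sout) (S : {set V}) (p : V -> seq Sin),
    is_prefix_tree root next C eps w S p ->
    (agr layer C w (union_edges root next S p))%:R <= (1 + eps) * n%:R.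

(* Give every vertex of L its canonical path: a root path that
   is chosen layer by layer, Viterbi-like, so as to maximise a left-to-right
   potential of its mismatch pattern.  Canonical paths are as good as any path
   to their endpoint, and they never enter a vertex through two different
   edges, so they form a tree.  Extend the deepest one to depth n by a spine,
   and change w into a word w' that keeps the agreements of w on the tree and
   copies the spine's labels elsewhere.  No tree path gains a mismatch, so the
   tree is a prefix tree for w'; every layer is entered by an edge agreeing
   with w', and so is every vertex of L (the last letter of a path at suffix
   distance < 1 - eps agrees).  As tree edges enter distinct vertices, agr is
   at least n plus the number of layers i with |L_i| >= 2, and eps-sensitivity
   bounds that number by eps n. *)

From mathcomp Require Import all_boot all_order all_algebra.
From mathcomp Require Import lra.
Set Implicit Arguments. Unset Strict Implicit. Unset Printing Implicit Defensive.
Import Order.TTheory GRing.Theory Num.Theory.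
Local Open Scope ring_scope.

Section Excess.
Variables (R : realFieldType) (dl : R).

Definition excess_lt (c : R) (ds : seq bool) : Prop :=
  forall i, (i < size ds)%N ->
    (count id (drop i ds))%:R - dl * (size ds - i)%:R < c.

Lemma excess_lt_cat c p s : excess_lt c (p ++ s) <->
  excess_lt c s /\ excess_lt (c + dl * (size s)%:R - (count id s)%:R) p.
Proof.
split=> [h|[hs hp] i].
- split=> i hi.
  + have := h (size p + i)%N; rewrite size_cat ltn_add2l drop_cat ifN -?leqNgt ?leq_addr //.
    by rewrite addKn subnDl; apply.
  + have := h i; rewrite size_cat (ltn_addr _ hi) => /(_ isT).
    rewrite drop_cat hi count_cat natrD addnC -addnBA ?(ltnW hi) // natrD; lra.
- rewrite size_cat drop_cat => hi; case: (ltnP i (size p)) => hip.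
  + have := hp i hip; rewrite count_cat natrD addnC -addnBA ?(ltnW hip) // natrD.
    lra.
  + have hi' : (i - size p < size s)%N by rewrite ltn_subLR.
    by have := hs _ hi'; rewrite subnBA // addnC.
Qed.

Lemma excess_lt1 c b : excess_lt c [:: b] <-> b%:R - dl < c.
Proof.
split=> [/(_ 0%N isT)|h [|i] //= _]; by rewrite /= addn0 subn0 mulr1.
Qed.

(* [margin ds] is the minimum of 0 and of [dl * size t - count id t] over the
   suffixes t of ds; unlike the suffix condition itself it is computed left to
   right, which is what the choice of canonical paths below relies on. *)
Definition margin (ds : seq bool) : R :=
  foldl (fun m (b : bool) => Num.min 0 (m + dl - b%:R)) 0 ds.

Lemma margin_rcons ds b : margin (rcons ds b) = Num.min 0 (margin ds + dl - b%:R).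
Proof. by rewrite /margin foldl_rcons. Qed.

Lemma margin_le0 ds : margin ds <= 0.
Proof.
by elim/last_ind: ds => [|ds b _]; rewrite ?margin_rcons ?ge_min ?lexx.
Qed.

Lemma excess_lt_margin c ds : 0 < c -> excess_lt c ds <-> 0 < margin ds + c.
Proof.
elim/last_ind: ds c => [|ds b IH] c c0; first by rewrite /margin add0r.
rewrite -cats1 excess_lt_cat excess_lt1 /= addn0 mulr1 cats1 margin_rcons.
have := margin_le0 ds.
case: (ltrP (b%:R - dl) c) => hb hm; last first.
  by split=> [[]//|]; case: (leP 0 (margin ds + dl - b%:R)) => h2 h; lra.
rewrite IH; last by lra.
by case: (leP 0 (margin ds + dl - b%:R)) => h2; split=> [[]|]; lra.
Qed.

Lemma excess_lt0_rcons ds b :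
  excess_lt 0 (rcons ds b) <-> 0 < margin ds + dl - b%:R.
Proof.
rewrite -cats1 excess_lt_cat excess_lt1 /= addn0 mulr1 add0r.
have := margin_le0 ds.
case: (ltrP (b%:R - dl) 0) => hb hm; last by split=> [[]//|]; lra.
by rewrite excess_lt_margin ?addrA; [split=> [[]|]|lra].
Qed.

Lemma excess_lt0_rcons_last ds b : dl <= 1 -> excess_lt 0 (rcons ds b) -> b = false.
Proof. by move=> hd; rewrite -cats1 excess_lt_cat excess_lt1; case: b => -[] //=; lra. Qed.

Lemma excess_lt0_cat_nseq_false ds k :
  0 < dl -> excess_lt 0 ds -> excess_lt 0 (ds ++ nseq k false).
Proof.
move=> dl_gt0 h; apply/excess_lt_cat; split=> [i|].
  rewrite size_nseq drop_nseq count_nseq mul0n subr_lt0 => hi.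
  by rewrite mulr_gt0 // ltr0n subn_gt0.
rewrite size_nseq count_nseq mul0n subr0 add0r => i /h; have : 0 <= dl * k%:R.
  by rewrite mulr_ge0 // ltW.
lra.
Qed.

Lemma count_id_le_nth (b b' : seq bool) : size b = size b' ->
  (forall j, nth false b j -> nth false b' j) -> (count id b <= count id b')%N.
Proof.
elim: b b' => [|x b IH] [|x' b'] //= [hs] h.
apply: leq_add; first by move: (h 0%N) => /= {}h; case: x h; case: x' => // ->.
by apply: IH => // j; apply: (h j.+1).
Qed.

Lemma excess_lt_le_nth c b b' : size b = size b' ->
  (forall j, nth false b j -> nth false b' j) -> excess_lt c b' -> excess_lt c b.
Proof.
move=> hs hn h i; rewrite hs => /h; rewrite -hs.
have : (count id (drop i b) <= count id (drop i b'))%N.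
  by apply: count_id_le_nth => [|j]; rewrite ?size_drop ?hs // !nth_drop; apply: hn.
rewrite -(ler_nat R); lra.
Qed.

End Excess.

Section LayeredPaths.
Variables (Sin V : finType) (n : nat) (layer : V -> nat) (root : V)
  (next : V -> Sin -> V).
Hypothesis layered : layered_graph n layer root next.
Local Open Scope nat_scope.

Local Notation vtx := (vtx root next).

Lemma vtx_rcons p a : vtx (rcons p a) = next (vtx p) a.
Proof. by rewrite /vtx foldl_rcons. Qed.

Lemma layer_next v a : layer v < n -> layer (next v a) = (layer v).+1.
Proof. by case: layered => _ _ _; apply. Qed.

Lemma layer_vtx p : size p <= n -> layer (vtx p) = size p.
Proof.
elim/last_ind: p => [|p a IH]; first by case: layered.
rewrite size_rcons => hp.
by rewrite vtx_rcons layer_next IH ?(ltnW hp).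
Qed.

Lemma edges_fromE u p a0 : edges_from next u p =
  [seq (foldl next u (take j p), nth a0 p j) | j <- iota 0 (size p)].
Proof.
elim: p u => [|a p IH] u //=.
by rewrite IH -[1]addn0 iotaDl -map_comp.
Qed.

Lemma edges_from_rcons u p a : edges_from next u (rcons p a) =
  rcons (edges_from next u p) (foldl next u p, a).
Proof. by elim: p u => [|b p IH] u //=; rewrite IH. Qed.

Lemma size_edges_from u p : size (edges_from next u p) = size p.
Proof. by elim: p u => [|b p IH] u //=; rewrite IH. Qed.

Lemma edges_from_root_nth p a0 j : j < size p ->
  (vtx (take j p), nth a0 p j) \in edges_from next root p.
Proof. by move=> hj; rewrite (edges_fromE _ _ a0) map_f // mem_iota. Qed.

Lemma mem_edges_from_root p e a0 : size p <= n ->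
  e \in edges_from next root p ->
  exists2 j, j < size p & e = (vtx (take j p), nth a0 p j) /\ layer e.1 = j.
Proof.
move=> hp; rewrite (edges_fromE _ _ a0) => /mapP [j]; rewrite mem_iota => /andP[_ hj] ->.
exists j => //; split=> //=.
by rewrite layer_vtx size_take hj // (leq_trans (ltnW hj)).
Qed.

End LayeredPaths.

Lemma onth_nth_lt (T : Type) (x0 : T) (s : seq T) j : (j < size s)%N ->
  onth s j = Some (nth x0 s j).
Proof. by move=> h; rewrite onthE (nth_map x0). Qed.

Lemma hamming_drop_map (Sout : finType) (I : Type) (f g : I -> Sout) s i :
  hamming (drop i (map f s)) (drop i (map g s)) = count (fun j => f j != g j) (drop i s).
Proof. by rewrite /hamming -!map_drop zip_map count_map. Qed.

Section Mismatches.
Variables (Sin Sout V : finType) (n : nat) (layer : V -> nat) (root : V)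
  (next : V -> Sin -> V) (C : V -> Sin -> Sout).
Hypothesis layered : layered_graph n layer root next.

Local Notation vtx := (vtx root next).

(* The test counted by [agr]: the edge leaving a vertex of layer i is compared
   with [onth w i], the paper's w[i+1]. *)
Definition agree (w : seq Sout) (e : V * Sin) : bool :=
  Some (C e.1 e.2) == onth w (layer e.1).

Definition mismatches (w : seq Sout) (p : seq Sin) : seq bool :=
  [seq ~~ agree w e | e <- edges_from next root p].

Lemma size_mismatches w p : size (mismatches w p) = size p.
Proof. by rewrite size_map size_edges_from. Qed.

Lemma mismatches_rcons w p a :
  mismatches w (rcons p a) = rcons (mismatches w p) (~~ agree w (vtx p, a)).
Proof. by rewrite /mismatches edges_from_rcons map_rcons. Qed.

Lemma nth_mismatches w p a0 j : (j < size p)%N ->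
  nth false (mismatches w p) j = ~~ agree w (vtx (take j p), nth a0 p j).
Proof.
move=> hj; rewrite /mismatches (nth_map (root, a0)) ?size_edges_from //.
by rewrite (edges_fromE _ _ _ a0) (nth_map 0%N) ?size_iota // nth_iota.
Qed.

Lemma mismatches_le_nth w w' p :
  (forall e, e \in edges_from next root p -> agree w e -> agree w' e) ->
  forall j, nth false (mismatches w' p) j -> nth false (mismatches w p) j.
Proof.
case: p => [|a0 p] h j; first by rewrite nth_nil.
case: (ltnP j (size (a0 :: p))) => hj; last by rewrite nth_default ?size_mismatches.
by rewrite !(nth_mismatches _ a0) //; apply/contra/h/edges_from_root_nth.
Qed.

Lemma hamming_drop_codeword w p i : size w = n -> (size p <= n)%N ->
  hamming (drop i (codeword root next C p)) (drop i (take (size p) w)) =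
  count id (drop i (mismatches w p)).
Proof.
case: p => [|a0 p'] hw hp; first by rewrite take0.
set p := a0 :: p' in hp *; set x0 := C root a0.
rewrite /codeword /mismatches (edges_fromE _ _ _ a0) -(map_nth_iota0 x0) ?hw //.
rewrite -!map_comp hamming_drop_map -map_drop count_map; apply: eq_in_count => j.
move=> /mem_drop; rewrite mem_iota /= => hj.
rewrite /agree /= (layer_vtx layered) size_take hj ?(leq_trans (ltnW hj)) //.
by rewrite (onth_nth_lt x0) ?hw ?(leq_trans hj hp).
Qed.

Variable R : realFieldType.

Lemma dsfx_lt_excess (eps : R) w p : size w = n -> (size p <= n)%N -> eps < 1 ->
  dsfx R (codeword root next C p) (take (size p) w) < 1 - eps <->
  excess_lt (1 - eps) 0 (mismatches w p).
Proof.
move=> hw hp he.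
have hsz : size (codeword root next C p) = size p by rewrite size_map size_edges_from.
rewrite /dsfx hsz /excess_lt size_mismatches; split.
- move=> /bigmax_ltP [_ h] i hi; rewrite subr_lt0.
  have := h (Ordinal hi) isT; rewrite /= hamming_drop_codeword //.
  by rewrite ltr_pdivrMr // ltr0n subn_gt0.
- move=> h; apply/bigmax_ltP; split=> [|[i hi] _ /=]; first by rewrite subr_gt0.
  rewrite hamming_drop_codeword // ltr_pdivrMr ?ltr0n ?subn_gt0 // -subr_lt0.
  exact: h.
Qed.

End Mismatches.

Section CanonicalPaths.
Variables (Sin Sout V : finType) (n : nat) (layer : V -> nat) (root : V)
  (next : V -> Sin -> V) (C : V -> Sin -> Sout).
Hypothesis layered : layered_graph n layer root next.
Variables (R : realFieldType) (dl : R) (w : seq Sout).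

Local Notation vtx := (vtx root next).
Local Notation mismatches := (mismatches layer root next C w).
Local Notation agree := (agree layer C w).

Definition entry_edge k (path : V -> seq Sin) x (e : V * Sin) : bool :=
  [&& next e.1 e.2 == x, layer e.1 == k, vtx (path e.1) == e.1 & size (path e.1) == k].

Definition entry_margin (path : V -> seq Sin) (e : V * Sin) : R :=
  margin dl (mismatches (path e.1)) + dl - (~~ agree e)%:R.

Definition best_entry k path x e : bool :=
  entry_edge k path x e &&
  [forall e', entry_edge k path x e' ==> (entry_margin path e' <= entry_margin path e)].

(* The path to x is the best-margin extension of the paths already chosen one
   layer up; because every choice is made by [pick], paths chosen for different
   vertices never enter a vertex through different edges. *)
Fixpoint canonical_path (k : nat) (x : V) : seq Sin :=
  if k is k'.+1 then
    if [pick e | best_entry k' (canonical_path k') x e] is Some e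
    then rcons (canonical_path k' e.1) e.2 else [::]
  else [::].

Definition chosen_entry k x := [pick e | best_entry k (canonical_path k) x e].

Lemma canonical_pathS k x : canonical_path k.+1 x =
  if chosen_entry k x is Some e then rcons (canonical_path k e.1) e.2 else [::].
Proof. by []. Qed.

Lemma canonical_path_edge k x e : e \in edges_from next root (canonical_path k x) ->
  chosen_entry (layer e.1) (next e.1 e.2) = Some e.
Proof.
elim: k x => [|k IH] x //; rewrite canonical_pathS.
case he0: (chosen_entry k x) => [e0|] //.
have := he0; rewrite /chosen_entry; case: pickP => // e1 + [e1E]; rewrite e1E.
move=> /andP[/and4P[/eqP hx /eqP hl /eqP hv _] _].
rewrite edges_from_rcons mem_rcons inE => /orP[/eqP ->|/IH //].
by rewrite -/(vtx _) hv /= hl hx -surjective_pairing.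
Qed.

Lemma canonical_path_spec k q : (k <= n)%N -> size q = k ->
  let c := canonical_path k (vtx q) in
  [/\ size c = k, vtx c = vtx q,
      margin dl (mismatches q) <= margin dl (mismatches c) &
      (excess_lt dl 0 (mismatches q) -> excess_lt dl 0 (mismatches c))].
Proof.
elim: k q => [|k IH] q hk hq; first by case: q hq.
case/lastP: q hq => [|q a] //; rewrite size_rcons => -[hq].
have [IH1 IH2 IH3 _] := IH q (ltnW hk) hq; move=> c.
have hqa : entry_edge k (canonical_path k) (vtx (rcons q a)) (vtx q, a).
  by rewrite /entry_edge /= IH1 IH2 vtx_rcons (layer_vtx layered) hq ?(ltnW hk) ?eqxx.
case: (arg_maxP (entry_margin (canonical_path k)) hqa) => e he emax.
rewrite /c canonical_pathS /chosen_entry; case: pickP => [e0 he0|/(_ e)]; last first.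
  move/negbT; rewrite /best_entry he => /forallPn [e'].
  by rewrite negb_imply => /andP[/emax h /negP].
case/andP: he0 => /and4P[/eqP hx /eqP hl /eqP hv /eqP hs] /forallP bmax.
have := implyP (bmax (vtx q, a)) hqa; rewrite /entry_margin /= => hle.
rewrite size_rcons hs vtx_rcons hv hx !mismatches_rcons hv -surjective_pairing.
split=> //; last by rewrite !excess_lt0_rcons; lra.
by rewrite !margin_rcons le_min ge_min lexx /= ge_min; apply/orP; right; lra.
Qed.

End CanonicalPaths.

Lemma card_ge_layers (V : finType) (layer : V -> nat) n (X : {set V})
    (G : {set 'I_n.+1}) :
  (forall x, layer x <= n)%N ->
  (forall j, (0 < j <= n)%N -> exists2 x, x \in X & layer x = j) ->
  (forall j : 'I_n.+1, j \in G -> 1 < #|[set x in X | layer x == j]|)%N ->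
  (n + #|G| <= #|X|)%N.
Proof.
move=> layer_le cover crowded.
have -> : #|X| = (\sum_(j < n.+1) #|[set x in X | layer x == j]|)%N.
  rewrite -sum1_card (partition_big (fun x => inord (layer x) : 'I_n.+1) xpredT) //=.
  apply: eq_bigr => j _; rewrite -sum1_card; apply: eq_bigl => x; rewrite !inE.
  congr (_ && _); apply/eqP/eqP => [<-|xj]; first by rewrite inordK ?ltnS.
  by apply: val_inj; rewrite /= inordK ?ltnS.
have <- : (\sum_(j < n.+1) ((0 < j)%N + (j \in G)) = n + #|G|)%N.
  rewrite big_split /=; congr (_ + _)%N.
    by rewrite big_ord_recl /= add0n sum1_card card_ord.
  by rewrite -sum1_card [RHS]big_mkcond; apply: eq_bigr => j _; case: (j \in G).
apply: leq_sum => j _; case jG: (j \in G).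
  by apply: leq_trans (crowded j jG); case: (0 < j)%N.
have [j0|j_gt0] := posnP j; first by rewrite j0.
have [|x xX xj] := cover j; first by rewrite j_gt0 -ltnS ltn_ord.
by apply/card_gt0P; exists x; rewrite inE xX xj eqxx.
Qed.

Lemma Lset_sub_Lall (Sin Sout V : finType) n (root : V) (next : V -> Sin -> V)
    (C : V -> Sin -> Sout) (R : realFieldType) (eps : R) (w : n.-tuple Sout)
    (i : 'I_n.+1) :
  (0 < i)%N -> {subset Lset root next C eps w i <= Lall root next C eps w}.
Proof. by move=> i_gt0 v vL; rewrite inE; apply/existsP; exists i; rewrite i_gt0. Qed.

Section RichPrefixTree.
Variables (Sin Sout V : finType) (n : nat) (layer : V -> nat) (root : V)
  (next : V -> Sin -> V) (C : V -> Sin -> Sout).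
Hypothesis layered : layered_graph n layer root next.
Variables (R : realFieldType) (eps : R) (w : n.-tuple Sout).
Hypotheses (eps_ge0 : 0 <= eps) (eps_lt1 : eps < 1).
Variables (vd : V) (a0 : Sin).
Hypothesis vd_good : vd \in Lall root next C eps w.
Hypothesis vd_deepest :
  forall v, v \in Lall root next C eps w -> (layer v <= layer vd)%N.

Local Notation vtx := (vtx root next).
Local Notation agree := (agree layer C).
Local Notation good u p := (excess_lt (1 - eps) 0 (mismatches layer root next C u p)).
Local Notation d := (layer vd).
Local Open Scope nat_scope.

Definition canonical_path_to v :=
  canonical_path layer root next C (1 - eps) w (layer v) v.

Lemma canonical_path_to_spec v : v \in Lall root next C eps w ->
  [/\ 0 < layer v <= n, size (canonical_path_to v) = layer v,
      vtx (canonical_path_to v) = v & good w (canonical_path_to v)].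
Proof.
rewrite inE => /existsP [i /andP[i_gt0]]; rewrite inE => /existsP [q /andP[/eqP qv qgood]].
have hq : size q = i by rewrite size_tuple.
have i_le : i <= n by rewrite -ltnS ltn_ord.
have [c_size c_vtx _ c_good] := canonical_path_spec C layered (1 - eps) w i_le hq.
rewrite /canonical_path_to -qv (layer_vtx layered) hq ?i_le //; split; rewrite ?i_gt0 //.
by apply/c_good/(dsfx_lt_excess C layered); rewrite ?size_tuple ?hq.
Qed.

Definition spine := canonical_path_to vd ++ nseq (n - d) a0.
Definition spine_end := vtx spine.
Definition spine_edge j := (vtx (take j spine), nth a0 spine j).
Definition tree_vertices := spine_end |: Lall root next C eps w.
Definition tree_path v := if v == spine_end then spine else canonical_path_to v.
Definition tree_edges := union_edges root next tree_vertices tree_path.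

Lemma size_spine : size spine = n.
Proof.
have [/andP[_ d_le] size_d _ _] := canonical_path_to_spec vd_good.
by rewrite size_cat size_d size_nseq subnKC.
Qed.

Lemma layer_spine_edge j : j < n -> layer (spine_edge j).1 = j.
Proof. by move=> hj; rewrite (layer_vtx layered) size_take size_spine hj // ltnW. Qed.

Lemma spine_edge_tree j : j < n -> spine_edge j \in tree_edges.
Proof.
move=> hj; apply/bigcupP; exists spine_end; first exact: setU11.
by rewrite inE /tree_path eqxx edges_from_root_nth ?size_spine.
Qed.

Lemma tree_path_spec v : v \in tree_vertices ->
  [/\ size (tree_path v) = layer v, 0 < layer v <= n & vtx (tree_path v) = v].
Proof.
rewrite /tree_path; case: eqP => [->|neq /setU1P [//|/canonical_path_to_spec [] //]] _.
have [/andP[d_gt0 d_le] _ _ _] := canonical_path_to_spec vd_good.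
by rewrite /spine_end (layer_vtx layered) size_spine ?leqnn ?(leq_trans d_gt0).
Qed.

Lemma tree_edge_cases e : e \in tree_edges ->
  (layer e.1 < d /\
   chosen_entry layer root next C (1 - eps) w (layer e.1) (next e.1 e.2) = Some e) \/
  (d <= layer e.1 < n /\ e = spine_edge (layer e.1)).
Proof.
move=> /bigcupP [v vS]; rewrite inE => ev.
have [size_v /andP[_ lv_le] _] := tree_path_spec vS.
have [j hj [ej le1]] := mem_edges_from_root layered a0 (leq_trans (eq_leq size_v) lv_le) ev.
have j_lt : j < n by rewrite (leq_trans hj) ?size_v.
have [_ size_d _ _] := canonical_path_to_spec vd_good.
move: ev ej; rewrite /tree_path; case: eqP => [_|neq] ev ej.
- case: (ltnP j d) => hjd; last by right; rewrite le1 hjd.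
  left; split; first by rewrite le1.
  apply: (canonical_path_edge (k := d) (x := vd)).
  by rewrite ej /spine take_cat nth_cat size_d hjd edges_from_root_nth ?size_d.
- have vG : v \in Lall root next C eps w by case/setU1P: vS.
  left; split; last exact: (canonical_path_edge (k := layer v) (x := v)).
  by rewrite le1 (leq_trans hj) // size_v vd_deepest.
Qed.

Lemma layer_next_tree_edge e : e \in tree_edges -> layer (next e.1 e.2) = (layer e.1).+1.
Proof.
move=> /tree_edge_cases he; apply: (layer_next layered).
have [/andP[_ d_le] _ _ _] := canonical_path_to_spec vd_good.
by case: he => [[/leq_trans ->]|[/andP[]]].
Qed.

Lemma tree_in_degree1 e1 e2 : e1 \in tree_edges -> e2 \in tree_edges ->
  next e1.1 e1.2 = next e2.1 e2.2 -> e1 = e2.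
Proof.
move=> he1 he2 same.
have /eqP : (layer e1.1).+1 = (layer e2.1).+1.
  by rewrite -!layer_next_tree_edge // same.
rewrite eqSS => /eqP same_layer.
case: (tree_edge_cases he1) (tree_edge_cases he2) => [[lt1 pick1]|[/andP[ge1 _] ->]].
- case=> [[_ pick2]|[/andP[ge2 _] _]]; last by rewrite -same_layer leqNgt lt1 in ge2.
  by move: pick1 pick2; rewrite same_layer same => -> [].
- case=> [[lt2 _]|[_ ->]]; last by rewrite same_layer.
  by rewrite same_layer leqNgt lt2 in ge1.
Qed.

(* Agreements of [w] on the canonical part of the tree are kept; every other
   letter is taken from the spine, so that each layer is entered by an agreeing
   edge and no tree path gains a mismatch. *)
Definition adjusted j :=
  if (j < d) && [exists e in tree_edges, (layer e.1 == j) && agree w e]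
  then nth (C root a0) w j else C (spine_edge j).1 (spine_edge j).2.

Definition adjusted_word : n.-tuple Sout :=
  @Tuple n Sout (mkseq adjusted n) (introT eqP (size_mkseq adjusted n)).

Lemma onth_adjusted_word j : j < n -> onth adjusted_word j = Some (adjusted j).
Proof. by move=> hj; rewrite (onth_nth_lt (C root a0)) ?size_mkseq ?nth_mkseq. Qed.

Lemma spine_tail_agree j : d <= j < n -> agree adjusted_word (spine_edge j).
Proof.
move=> /andP[ge_d lt_n].
by rewrite /agree (layer_spine_edge lt_n) onth_adjusted_word // /adjusted ltnNge ge_d.
Qed.

Lemma agree_adjusted_word e : e \in tree_edges -> agree w e -> agree adjusted_word e.
Proof.
move=> he; case: (tree_edge_cases he) => [[lt_d _]|[tail ->]] agree_e; last first.
  exact: spine_tail_agree.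
have [/andP[_ d_le] _ _ _] := canonical_path_to_spec vd_good.
have lt_n : layer e.1 < n by apply: leq_trans lt_d d_le.
rewrite /agree onth_adjusted_word // /adjusted lt_d /=.
have -> : [exists e' in tree_edges, (layer e'.1 == layer e.1) && agree w e'].
  by apply/existsP; exists e; rewrite he eqxx.
by move: agree_e; rewrite /agree (onth_nth_lt (C root a0)) ?size_tuple.
Qed.

Lemma tree_edge_of_path v : v \in tree_vertices ->
  {subset edges_from next root (tree_path v) <= tree_edges}.
Proof. by move=> vS e ev; apply/bigcupP; exists v; rewrite // inE. Qed.

Lemma spine_good : good adjusted_word spine.
Proof.
have [/andP[_ d_le] size_d _ good_d] := canonical_path_to_spec vd_good.
set padded := mismatches layer root next C w (canonical_path_to vd) ++ nseq (n - d) false.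
have sizeE : size (mismatches layer root next C adjusted_word spine) = size padded.
  by rewrite size_cat !size_mismatches size_nseq /spine size_cat size_nseq.
apply: excess_lt_le_nth sizeE _ _; last first.
  by apply: excess_lt0_cat_nseq_false; rewrite // subr_gt0.
move=> j; case: (ltnP j n) => lt_n; last by rewrite nth_default // size_mismatches size_spine.
rewrite (nth_mismatches _ _ _ _ _ a0) ?size_spine // /padded nth_cat size_mismatches size_d.
case: (ltnP j d) => lt_d; last by rewrite -/(spine_edge j) spine_tail_agree ?lt_d.
rewrite (nth_mismatches _ _ _ _ _ a0) ?size_d //; apply: contra => agree_j.
rewrite -/(spine_edge j) agree_adjusted_word ?spine_edge_tree //.
by move: agree_j; rewrite /spine_edge /spine take_cat nth_cat size_d lt_d.
Qed.

Lemma tree_path_good v : v \in tree_vertices -> good adjusted_word (tree_path v).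
Proof.
move=> vS; have inT := tree_edge_of_path vS; move: inT; rewrite /tree_path.
case: eqP => [_ _|neq inT]; first exact: spine_good.
have vG : v \in Lall root next C eps w by case/setU1P: vS.
have [_ _ _ good_v] := canonical_path_to_spec vG.
apply: excess_lt_le_nth good_v; first by rewrite !size_mismatches.
by apply: mismatches_le_nth => e ev; apply: agree_adjusted_word; exact: inT.
Qed.

Lemma last_edge_agrees v : v \in tree_vertices ->
  exists2 e, e \in tree_edges & agree adjusted_word e && (next e.1 e.2 == v).
Proof.
move=> vS; have [size_v /andP[lv_gt0 _] vtx_v] := tree_path_spec vS.
move: (tree_path_good vS) (tree_edge_of_path vS) size_v vtx_v.
case/lastP: (tree_path v) => [|q a]; first by move=> _ _ sz; rewrite -sz in lv_gt0.
rewrite mismatches_rcons => /excess_lt0_rcons_last last_ok inT _ vtx_v.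
exists (vtx q, a); first by apply: inT; rewrite edges_from_rcons mem_rcons mem_head.
rewrite -vtx_rcons vtx_v eqxx andbT; apply: negbFE; apply: last_ok.
by rewrite gerDl oppr_le0.
Qed.

Lemma layer_entered_by_agreement j : j < n ->
  exists2 e, e \in tree_edges & agree adjusted_word e && (layer (next e.1 e.2) == j.+1).
Proof.
move=> lt_n; have spT := spine_edge_tree lt_n.
case agree_j: (agree adjusted_word (spine_edge j)).
  exists (spine_edge j) => //.
  by rewrite agree_j layer_next_tree_edge // (layer_spine_edge lt_n) eqxx.
move: agree_j; rewrite {1}/agree (layer_spine_edge lt_n) onth_adjusted_word // /adjusted.
case: ifP => [/andP[_ /existsP[e /andP[eT /andP[/eqP le agree_e]]]] _|_]; last by rewrite eqxx.
by exists e; rewrite // agree_adjusted_word // layer_next_tree_edge // le eqxx.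
Qed.

Lemma adjusted_prefix_tree :
  is_prefix_tree root next C eps adjusted_word tree_vertices tree_path.
Proof.
have path_good v : v \in tree_vertices ->
    (dsfx R (codeword root next C (tree_path v))
       (take (size (tree_path v)) adjusted_word) < 1 - eps)%R.
  move=> vS; have [size_v /andP[_ lv_le] _] := tree_path_spec vS.
  by apply/(dsfx_lt_excess C layered); rewrite ?size_tuple ?size_v //; apply: tree_path_good.
split=> [|v vS|e1 e2]; last exact: tree_in_degree1.
  apply/subsetP => v vS; have [size_v /andP[lv_gt0 lv_le] vtx_v] := tree_path_spec vS.
  rewrite inE; apply/existsP; exists (inord (layer v)).
  rewrite inordK ?ltnS // lv_gt0 inE; apply/existsP.
  exists (@Tuple (layer v) _ (tree_path v) (introT eqP size_v)).
  by rewrite /= vtx_v eqxx -size_v path_good.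
have [size_v /andP[_ lv_le] vtx_v] := tree_path_spec vS.
by split; [rewrite size_v | | apply: path_good].
Qed.

Lemma adjusted_agr_ge :
  n + #|[set i : 'I_n.+1 | (0 < i) && (1 < #|Lset root next C eps w i|)]|
  <= agr layer C adjusted_word tree_edges.
Proof.
set A := [set e in tree_edges | agree adjusted_word e].
have -> : agr layer C adjusted_word tree_edges = #|A| by [].
have in_deg1 : {in A &, injective (fun e => next e.1 e.2)}.
  by move=> e1 e2; rewrite !inE => /andP[e1T _] /andP[e2T _]; apply: tree_in_degree1.
rewrite -(card_in_imset in_deg1); apply: card_ge_layers; first by case: layered.
  move=> j /andP[j_gt0 j_le].
  have [|e eT /andP[agree_e /eqP le]] := layer_entered_by_agreement (j := j.-1).
    by rewrite prednK.
  by exists (next e.1 e.2); [apply/imsetP; exists e; rewrite ?inE ?eT | rewrite le prednK].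
move=> j; rewrite inE => /andP[j_gt0 crowded]; apply: leq_trans crowded _.
apply/subset_leq_card/subsetP.
move=> v vL; have vG := Lset_sub_Lall j_gt0 vL.
have [e eT /andP[agree_e /eqP ev]] := last_edge_agrees (setU1r _ vG).
rewrite inE; apply/andP; split; first by apply/imsetP; exists e; rewrite ?inE ?eT.
move: vL; rewrite inE => /existsP[q /andP[/eqP <- _]].
by rewrite (layer_vtx layered) size_tuple // -ltnS ltn_ord.
Qed.

End RichPrefixTree.

Lemma card_pos_ord_split n (P Q : pred 'I_n.+1) : (forall i, Q i = ~~ P i) ->
  (#|[set i : 'I_n.+1 | (0 < i)%N && P i]| + #|[set i : 'I_n.+1 | (0 < i)%N && Q i]|)%N = n.
Proof.
move=> QE; have := cardsID [set i | P i] [set~ ord0 : 'I_n.+1].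
rewrite cardsC1 card_ord /= => nE; apply: etrans nE; congr (_ + _)%N; apply: eq_card => i.
  by rewrite !inE lt0n.
by rewrite !inE lt0n QE andbC.
Qed.

Lemma exists_prefix_tree_agr_ge (Sin Sout V : finType) (n : nat) (layer : V -> nat)
    (root : V) (next : V -> Sin -> V) (C : V -> Sin -> Sout)
    (R : realFieldType) (eps : R) (w : n.-tuple Sout) :
  layered_graph n layer root next -> 0 <= eps -> eps < 1 ->
  Lall root next C eps w != set0 ->
  exists (w' : n.-tuple Sout) (S : {set V}) (p : V -> seq Sin),
    is_prefix_tree root next C eps w' S p /\
    (n + #|[set i : 'I_n.+1 | (0 < i)%N && (1 < #|Lset root next C eps w i|)%N]|
     <= agr layer C w' (union_edges root next S p))%N.
Proof.
move=> layered eps_ge0 eps_lt1 /set0Pn [v0 v0G].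
have [vd vdG vd_deepest] : exists2 vd, vd \in Lall root next C eps w &
    forall v, v \in Lall root next C eps w -> (layer v <= layer vd)%N.
  by case: (arg_maxnP layer v0G) => vd; exists vd.
have [a0 _] : exists a0 : Sin, true.
  move: vdG; rewrite inE => /existsP[i /andP[i_gt0]].
  rewrite inE => /existsP[[[|a0 q] /= sz] _].
    by rewrite -(eqP sz) in i_gt0.
  by exists a0.
exists (adjusted_word layer root next C eps w vd a0),
  (tree_vertices layer root next C eps w vd a0), (tree_path layer root next C eps w vd a0).
split; first exact: adjusted_prefix_tree.
exact: adjusted_agr_ge.
Qed.

Theorem lemma5p12 (Sin Sout V : finType) (n : nat) (layer : V -> nat)
  (root : V) (next : V -> Sin -> V) (C : V -> Sin -> Sout)
  (R : realFieldType) (eps : R) :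
  layered_graph n layer root next ->
  0 < eps ->
  eps_sensitive n layer root next C eps ->
  forall w : n.-tuple Sout,
    (1 - eps) * n%:R <=
    (#|[set i : 'I_n.+1 | (0 < i)%N &&
          (#|Lset root next C eps w i| <= 1)%N]|)%:R.
Proof.
move=> layered eps_gt0 sensitive w.
set L := Lset root next C eps w.
set G := [set i : 'I_n.+1 | (0 < i)%N && (1 < #|L i|)%N].
have split_n : #|[set i : 'I_n.+1 | (0 < i)%N && (#|L i| <= 1)%N]|%:R + #|G|%:R = n%:R :> R.
  by rewrite -natrD card_pos_ord_split // => i; apply: ltnNge.
case: (lerP 1 eps) => [eps_ge1|eps_lt1].
  by apply: le_trans (ler0n _ _); rewrite mulr_le0_ge0 ?subr_le0.
suff : #|G|%:R <= eps * n%:R by lra.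
case: (set_0Vmem G) => [->|[i]]; first by rewrite cards0 mulr_ge0 // ltW.
rewrite inE => /andP[i_gt0 /ltnW /card_gt0P [v vL]].
have Lall_n0 : Lall root next C eps w != set0.
  by apply/set0Pn; exists v; apply: Lset_sub_Lall vL.
have [w' [S [p [ptree agr_ge]]]] :=
  exists_prefix_tree_agr_ge layered (ltW eps_gt0) eps_lt1 Lall_n0.
have := sensitive w' S p ptree; rewrite -(ler_nat R) natrD in agr_ge; lra.
Qed.
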